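(* Let $c>0$ and $\eta_0>0$. For measurable complex-valued functions $z_1,z_2$ on $\mathbb{R}$ with $\sup_{\omega\in\mathbb{R},i=1,2}|z_i(\omega)|\le1$, write $z=(z_1,z_2)$ and define on $\mathbb{R}_+\times\mathbb{R}$ $$\Psi_z(\tilde\lambda,\omega)=\frac{z_1(\omega)}{(c+i\omega+\tilde\lambda)(c+i\omega+\tilde\lambda-\tilde\lambda z_2(\omega))}.$$ Then: (i) the function $\tilde\lambda\mapsto\int_{-\infty}^\infty\Psi_z(\tilde\lambda,\omega)d\omega$ is continuously differentiable on $\mathbb{R}_+$ and its derivative is bounded over $\tilde\lambda\in[0,\eta_0]$ by a bound independent of $z$; (ii) there exists $K>0$ depending only on $c$ and $\eta_0$ such that for any $W\ge1$ or $W=\infty$ and any $\tilde z=(\tilde z_1,\tilde z_2)$ also satisfying $\sup_{\omega,i}|\tilde z_i(\omega)|\le1$, $$\sup_{\tilde\lambda\in[0,\eta_0]}\Big|\int\Psi_z(\tilde\lambda,\omega)d\omega-\int\Psi_{\tilde z}(\tilde\lambda,\omega)d\omega\Big|\le K\Big(\max_{i=1,2}\sup_{\omega\in[-W,W]}|z_i(\omega)-\tilde z_i(\omega)|+\frac1W\Big).$$ *)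

From HB Require Import structures.
From mathcomp Require Import all_boot all_order all_algebra.
From mathcomp Require Import all_classical all_reals all_analysis.
From mathcomp Require Import complex.
Set Implicit Arguments. Unset Strict Implicit. Unset Printing Implicit Defensive.
Import Order.TTheory GRing.Theory Num.Theory.
Local Open Scope ring_scope.
Local Open Scope classical_set_scope.
Local Open Scope complex_scope.

Notation normc := ComplexField.Normc.normc.

Definition cmeasurable (R : realType) (f : R -> R[i]) : Prop :=
  measurable_fun [set: R] (fun w => complex.Re (f w)) /\
  measurable_fun [set: R] (fun w => complex.Im (f w)).

Definition cintegral (R : realType) (f : R -> R[i]) : R[i] :=
  (Rintegral (@lebesgue_measure R) [set: R] (fun w => complex.Re (f w)))%:C
  + 'i * (Rintegral (@lebesgue_measure R) [set: R] (fun w => complex.Im (f w)))%:C.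

Definition Psi (R : realType) (c : R) (z1 z2 : R -> R[i]) (lam w : R) : R[i] :=
  z1 w / ((c%:C + 'i * w%:C + lam%:C) *
          (c%:C + 'i * w%:C + lam%:C - lam%:C * z2 w)).

Definition PsiInt (R : realType) (c : R) (z1 z2 : R -> R[i]) (lam : R) : R[i] :=
  cintegral (Psi c z1 z2 lam).

Definition admissible (R : realType) (z1 z2 : R -> R[i]) : Prop :=
  cmeasurable z1 /\ cmeasurable z2 /\
  (forall w, normc (z1 w) <= 1) /\ (forall w, normc (z2 w) <= 1).

Definition C1_on_Rplus (R : realType) (F D : R -> R[i]) : Prop :=
  (forall l : R, 0 <= l -> forall e : R, 0 < e -> exists d : R, 0 < d /\
     forall h : R, h != 0 -> `|h| < d -> 0 <= l + h ->
       normc ((F (l + h) - F l) / h%:C - D l) < e) /\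
  (forall l : R, 0 <= l -> forall e : R, 0 < e -> exists d : R, 0 < d /\
     forall l' : R, 0 <= l' -> `|l' - l| < d -> normc (D l' - D l) < e).

From HB Require Import structures.
From mathcomp Require Import all_boot all_order all_algebra.
From mathcomp Require Import all_classical all_reals all_analysis.
From mathcomp Require Import complex.
From mathcomp Require Import measurable_realfun ring lra.
Set Implicit Arguments. Unset Strict Implicit. Unset Printing Implicit Defensive.
Import Order.TTheory GRing.Theory Num.Theory.
Import numFieldNormedType.Exports ComplexField.Normc.
Local Open Scope ring_scope.
Local Open Scope complex_scope.

(* Write Psi_z(l, w) = z1 w / (a b) with a = c + i w + l and b = a - l z2 w.  Both
   |a| and |b| are at least c and, uniformly for l in [0, L] and |z2| <= 1, grow
   linearly in |w|, so every integrand below is dominated by a multiple of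
   (1 + |w|)^-2, whose integral over R is 2.
   (i) The second-order Taylor remainder of l |-> Psi_z(l, w) is
   O((l' - l)^2 (1 + |w|)^-2); integrating gives the derivative, and adding the
   expansions from l to l' and from l' to l gives its continuity.
   (ii) On [-W, W] the two integrands differ by O(delta (1 + |w|)^-2); off [-W, W]
   each is O((1 + |w|)^-2) = O((W + |w|)^-2), which integrates to O(1/W).  Letting
   W go to infinity gives the case W = oo. *)

Lemma measurable_inv (R : realType) : measurable_fun setT (@GRing.inv R).
Proof.
rewrite -(setUv [set (0:R)]).
apply/measurable_funU; [by [] | exact: measurableC |].
split; first exact: measurable_fun_set1.
apply: open_continuous_measurable_fun.
  by rewrite openC; apply: accessible_closed_set1; exact: hausdorff_accessible.
by move=> x; rewrite inE => /eqP x0; exact: inv_continuous.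
Qed.

Section ComplexNorm.
Context {R : realType}.
Implicit Types x y : R[i].

Lemma normc_ge0 x : 0 <= normc x.
Proof. by case: x => a b; exact: sqrtr_ge0. Qed.

Lemma normc_real (r : R) : normc r%:C = `|r|.
Proof. by rewrite /= expr0n /= addr0 sqrtr_sqr. Qed.

Lemma normc_Re x : `|complex.Re x| <= normc x.
Proof.
case: x => a b /=; rewrite -sqrtr_sqr ler_sqrt; last by rewrite addr_ge0 // sqr_ge0.
by rewrite lerDl sqr_ge0.
Qed.

Lemma normc_Im x : `|complex.Im x| <= normc x.
Proof.
case: x => a b /=; rewrite -sqrtr_sqr ler_sqrt; last by rewrite addr_ge0 // sqr_ge0.
by rewrite lerDr sqr_ge0.
Qed.

Lemma normc_le_ReIm x : normc x <= `|complex.Re x| + `|complex.Im x|.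
Proof.
case: x => a b /=.
have h : 0 <= `|a| + `|b| by rewrite addr_ge0.
rewrite -[X in _ <= X](ger0_norm h) -sqrtr_sqr ler_sqrt; last exact: sqr_ge0.
rewrite sqrrD -(real_normK (num_real a)) -(real_normK (num_real b)).
by rewrite -addrA lerD2l lerDr mulrn_wge0 // mulr_ge0.
Qed.

Lemma le_normcB x y : normc (x - y) <= normc x + normc y.
Proof. by rewrite -(normcN y); exact: le_normcD. Qed.

End ComplexNorm.

Section ComplexMeasurable.
Context {R : realType}.
Implicit Types f g : R -> R[i].

Lemma cmeasurable_cst (k : R[i]) : cmeasurable (fun _ : R => k).
Proof. by split; exact: measurable_cst. Qed.

Lemma cmeasurable_real : cmeasurable (fun w : R => w%:C).
Proof. by split => /=; [exact: measurable_id | exact: measurable_cst]. Qed.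

Lemma cmeasurableD f g : cmeasurable f -> cmeasurable g -> cmeasurable (fun w => f w + g w).
Proof.
move=> [f1 f2] [g1 g2]; split.
- have -> : (fun w => complex.Re (f w + g w)) = (fun w => complex.Re (f w) + complex.Re (g w)).
    by apply: funext => w; case: (f w) => ??; case: (g w).
  exact: measurable_funD.
- have -> : (fun w => complex.Im (f w + g w)) = (fun w => complex.Im (f w) + complex.Im (g w)).
    by apply: funext => w; case: (f w) => ??; case: (g w).
  exact: measurable_funD.
Qed.

Lemma cmeasurableN f : cmeasurable f -> cmeasurable (fun w => - f w).
Proof.
move=> [f1 f2]; split.
- have -> : (fun w => complex.Re (- f w)) = (fun w => - complex.Re (f w)).
    by apply: funext => w; case: (f w).
  exact: measurable_funN.
- have -> : (fun w => complex.Im (- f w)) = (fun w => - complex.Im (f w)).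
    by apply: funext => w; case: (f w).
  exact: measurable_funN.
Qed.

Lemma cmeasurableB f g : cmeasurable f -> cmeasurable g -> cmeasurable (fun w => f w - g w).
Proof. by move=> mf mg; apply: cmeasurableD => //; exact: cmeasurableN. Qed.

Lemma cmeasurableM f g : cmeasurable f -> cmeasurable g -> cmeasurable (fun w => f w * g w).
Proof.
move=> [f1 f2] [g1 g2]; split.
- have -> : (fun w => complex.Re (f w * g w)) =
            (fun w => complex.Re (f w) * complex.Re (g w) - complex.Im (f w) * complex.Im (g w)).
    by apply: funext => w; case: (f w) => ??; case: (g w).
  by apply: measurable_funB; apply: measurable_funM.
- have -> : (fun w => complex.Im (f w * g w)) =
            (fun w => complex.Re (f w) * complex.Im (g w) + complex.Im (f w) * complex.Re (g w)).
    by apply: funext => w; case: (f w) => ??; case: (g w).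
  by apply: measurable_funD; apply: measurable_funM.
Qed.

Lemma cmeasurableV f : cmeasurable f -> cmeasurable (fun w => (f w)^-1).
Proof.
move=> [f1 f2].
set n2 := fun w => complex.Re (f w) ^+ 2 + complex.Im (f w) ^+ 2.
have mn : measurable_fun setT (fun w => (n2 w)^-1).
  apply: (measurableT_comp (@measurable_inv R)).
  by apply: measurable_funD; apply: measurable_funX.
split.
- have -> : (fun w => complex.Re ((f w)^-1)) = (fun w => complex.Re (f w) * (n2 w)^-1).
    by apply: funext => w; rewrite /n2; case: (f w).
  exact: measurable_funM.
- have -> : (fun w => complex.Im ((f w)^-1)) = (fun w => - (complex.Im (f w) * (n2 w)^-1)).
    by apply: funext => w; rewrite /n2; case: (f w).
  by apply: measurable_funN; exact: measurable_funM.
Qed.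

End ComplexMeasurable.

Section ComplexIntegral.
Context {R : realType}.
Implicit Types f g : R -> R[i].
Local Notation mu := (@lebesgue_measure R).

Definition cintegrable f :=
  mu.-integrable setT (EFin \o (fun w => complex.Re (f w))) /\
  mu.-integrable setT (EFin \o (fun w => complex.Im (f w))).

Lemma Rintegral_dominated (h G : R -> R) : measurable_fun setT h ->
  mu.-integrable setT (EFin \o G) -> (forall w, `|h w| <= G w) ->
  mu.-integrable setT (EFin \o h) /\ `|Rintegral mu setT h| <= Rintegral mu setT G.
Proof.
move=> mh iG hG.
have ih : mu.-integrable setT (EFin \o h).
  apply: le_integrable iG => //; first exact/measurable_EFinP.
  by move=> w _ /=; rewrite lee_fin (le_trans (hG w)) // ler_norm.
have iabs : mu.-integrable setT (EFin \o (fun w => `|h w|)).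
  apply: le_integrable iG => //; first by apply/measurable_EFinP; exact: measurableT_comp.
  by move=> w _ /=; rewrite lee_fin normr_id (le_trans (hG w)) // ler_norm.
split => //; apply: le_trans (le_normr_Rintegral _ ih) _ => //.
by apply: le_Rintegral => // w _; exact: hG.
Qed.

Lemma cintegrable_dominated f (G : R -> R) : cmeasurable f ->
  mu.-integrable setT (EFin \o G) -> (forall w, normc (f w) <= G w) -> cintegrable f.
Proof.
move=> [m1 m2] iG hG; split.
- by case: (Rintegral_dominated m1 iG (fun w => le_trans (normc_Re _) (hG w))).
- by case: (Rintegral_dominated m2 iG (fun w => le_trans (normc_Im _) (hG w))).
Qed.

Lemma complex_ReIm (a b : R) : a%:C + 'i * b%:C = a +i* b.
Proof. by apply/eqP; rewrite eq_complex /= !mul0r !mul1r !subr0 !addr0 !add0r !eqxx. Qed.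

(* Bounding Re and Im separately costs the factor 2. *)
Lemma normc_cintegral_le f (G : R -> R) : cmeasurable f ->
  mu.-integrable setT (EFin \o G) -> (forall w, normc (f w) <= G w) ->
  normc (cintegral f) <= 2 * Rintegral mu setT G.
Proof.
move=> [m1 m2] iG hG.
have [_ h1] := Rintegral_dominated m1 iG (fun w => le_trans (normc_Re _) (hG w)).
have [_ h2] := Rintegral_dominated m2 iG (fun w => le_trans (normc_Im _) (hG w)).
rewrite /cintegral complex_ReIm; apply: le_trans (normc_le_ReIm _) _ => /=.
by rewrite mulr2n mulrDl mul1r lerD.
Qed.

Lemma cintegrableB f g : cintegrable f -> cintegrable g -> cintegrable (fun w => f w - g w).
Proof.
move=> [f1 f2] [g1 g2]; split.
- have -> : (EFin \o (fun w => complex.Re (f w - g w))) =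
    ((EFin \o (fun w => complex.Re (f w))) \- (EFin \o (fun w => complex.Re (g w))))%E.
    by apply: funext => w /=; case: (f w) => ??; case: (g w).
  exact: integrableB.
- have -> : (EFin \o (fun w => complex.Im (f w - g w))) =
    ((EFin \o (fun w => complex.Im (f w))) \- (EFin \o (fun w => complex.Im (g w))))%E.
    by apply: funext => w /=; case: (f w) => ??; case: (g w).
  exact: integrableB.
Qed.

Lemma cintegrableZ (r : R) f : cintegrable f -> cintegrable (fun w => r%:C * f w).
Proof.
move=> [f1 f2]; split.
- have -> : (EFin \o (fun w => complex.Re (r%:C * f w))) =
    (fun w => r%:E * (EFin \o (fun w => complex.Re (f w))) w)%E.
    by apply: funext => w /=; case: (f w) => ?? /=; rewrite mul0r subr0.
  exact: integrableZl.
- have -> : (EFin \o (fun w => complex.Im (r%:C * f w))) =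
    (fun w => r%:E * (EFin \o (fun w => complex.Im (f w))) w)%E.
    by apply: funext => w /=; case: (f w) => ?? /=; rewrite mul0r addr0.
  exact: integrableZl.
Qed.

Lemma cintegralB f g : cintegrable f -> cintegrable g ->
  cintegral (fun w => f w - g w) = cintegral f - cintegral g.
Proof.
move=> [f1 f2] [g1 g2]; rewrite /cintegral !complex_ReIm.
have -> : (fun w => complex.Re (f w - g w)) = (fun w => complex.Re (f w) - complex.Re (g w)).
  by apply: funext => w; case: (f w) => ??; case: (g w).
have -> : (fun w => complex.Im (f w - g w)) = (fun w => complex.Im (f w) - complex.Im (g w)).
  by apply: funext => w; case: (f w) => ??; case: (g w).
by rewrite !RintegralB.
Qed.

Lemma cintegralZ (r : R) f : cintegrable f ->
  cintegral (fun w => r%:C * f w) = r%:C * cintegral f.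
Proof.
move=> [f1 f2]; rewrite /cintegral !complex_ReIm.
have -> : (fun w => complex.Re (r%:C * f w)) = (fun w => r * complex.Re (f w)).
  by apply: funext => w; case: (f w) => ?? /=; rewrite mul0r subr0.
have -> : (fun w => complex.Im (r%:C * f w)) = (fun w => r * complex.Im (f w)).
  by apply: funext => w; case: (f w) => ?? /=; rewrite mul0r addr0.
rewrite !RintegralZl //.
by apply/eqP; rewrite eq_complex /= mul0r subr0 mul0r addr0 !eqxx.
Qed.

End ComplexIntegral.

Section SquareDecay.
Context {R : realType}.
Local Notation mu := (@lebesgue_measure R).

Definition sqr_decay (b w : R) : R := ((b + `|w|) ^+ 2)^-1.

Lemma sqr_decay_ge0 (b w : R) : 0 <= sqr_decay b w.
Proof. by rewrite /sqr_decay invr_ge0 sqr_ge0. Qed.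

Lemma continuous_sqr_decay (b : R) : 0 < b -> continuous (sqr_decay b).
Proof.
move=> b0 x; apply: cvgV; first by rewrite sqrf_eq0 gt_eqF // ltr_wpDr.
by apply: cvgM; apply: cvgD; try exact: cvg_cst; exact: norm_continuous.
Qed.

Lemma is_derive_sqr_decay (b x : R) : 0 < b -> 0 <= x ->
  is_derive x 1 (fun y : R => - (y + b)^-1) (sqr_decay b x).
Proof.
move=> b0 x0.
have hne : shift b x != 0 by rewrite /= gt_eqF // ltr_wpDl.
apply: (is_derive_eq (is_deriveN (is_deriveV hne (is_derive_shift x 1 b)))).
by rewrite /sqr_decay ger0_norm //= scaler1 opprK addrC.
Qed.

Lemma integral_sqr_decay (b : R) : 0 < b ->
  (\int[mu]_x (sqr_decay b x)%:E = (2 * b^-1)%:E)%E.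
Proof.
move=> b0; rewrite ge0_symfun_integralT; last 3 first.
- by move=> x; exact: sqr_decay_ge0.
- exact: continuous_sqr_decay.
- by move=> x; rewrite /sqr_decay /= normrN.
rewrite -set_itvcy (@ge0_continuous_FTC2y _ _ (fun y : R => - (y + b)^-1) 0 0).
- by rewrite add0r EFinN oppeK add0r -EFinM.
- by move=> x _; exact: sqr_decay_ge0.
- by apply: continuous_subspaceT => x; exact: continuous_sqr_decay.
- rewrite -oppr0; apply: cvgN; apply/gtr0_cvgV0; last exact: cvg_addrr.
  by near=> x; apply: ltr_wpDl => //; near: x; exact: nbhs_pinfty_ge.
- by move=> x x0; have [] := is_derive_sqr_decay b0 (ltW x0).
- apply: cvg_at_right_filter.
  by have [/derivable1_diffP/differentiable_continuous] := is_derive_sqr_decay b0 (lexx 0).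
- move=> x; rewrite in_itv /= andbT => x0.
  by rewrite derive1E; have [_ ->] := is_derive_sqr_decay b0 (ltW x0).
Unshelve. all: by end_near.
Qed.

Lemma integrable_sqr_decay (k b : R) : 0 < b ->
  mu.-integrable setT (EFin \o (fun w => k * sqr_decay b w)).
Proof.
move=> b0.
have -> : EFin \o (fun w => k * sqr_decay b w) =
          (fun w => k%:E * (EFin \o sqr_decay b) w)%E by [].
apply: integrableZl => //; apply/integrableP; split.
  by apply/measurable_EFinP; apply: continuous_measurable_fun; exact: continuous_sqr_decay.
under eq_integral do rewrite /= ger0_norm ?sqr_decay_ge0 //.
by rewrite integral_sqr_decay // ltry.
Qed.

Lemma Rintegral_sqr_decay (k b : R) : 0 < b ->
  Rintegral mu setT (fun w => k * sqr_decay b w) = k * (2 * b^-1).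
Proof.
move=> b0; rewrite RintegralZl; first by rewrite /Rintegral integral_sqr_decay.
- exact: measurableT.
- by have := integrable_sqr_decay 1 b0; under eq_fun do rewrite mul1r.
Qed.

Lemma sqr_decay_le_shift (b W w : R) : 0 <= b -> 0 < W -> W <= `|w| ->
  sqr_decay b w <= 4 * sqr_decay W w.
Proof.
move=> b0 W0 Ww; rewrite /sqr_decay.
have hp : 0 < W + `|w| by apply: ltr_pwDl.
have hq : 0 < b + `|w| by apply: ltr_wpDl => //; apply: lt_le_trans Ww.
have -> : 4 * ((W + `|w|) ^+ 2)^-1 = ((W + `|w|) ^+ 2 / 4)^-1.
  by field; rewrite gt_eqF.
rewrite lef_pV2 ?posrE ?divr_gt0 ?exprn_gt0 // ler_pdivrMr //; nra.
Qed.

Lemma cintegrable_decay (f : R -> R[i]) (k : R) : cmeasurable f ->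
  (forall w, normc (f w) <= k * sqr_decay 1 w) -> cintegrable f.
Proof. by move=> mf; exact: cintegrable_dominated mf (integrable_sqr_decay k ltr01). Qed.

Lemma normc_cintegral_le_decay (f : R -> R[i]) (k : R) : cmeasurable f ->
  (forall w, normc (f w) <= k * sqr_decay 1 w) -> normc (cintegral f) <= 4 * k.
Proof.
move=> mf hf; have := normc_cintegral_le mf (integrable_sqr_decay k ltr01) hf.
by rewrite Rintegral_sqr_decay // invr1; lra.
Qed.

End SquareDecay.

Section TaylorC1.
Context {R : realType}.
Variables F D : R -> R[i].
Hypothesis taylor : forall L : R, 0 <= L -> exists2 C : R, 0 <= C &
  forall l l' : R, 0 <= l <= L -> 0 <= l' <= L ->
    normc (F l' - F l - (l' - l)%:C * D l) <= (l' - l) ^+ 2 * C.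

Lemma taylor_differentiable (l : R) : 0 <= l -> forall e : R, 0 < e ->
  exists d : R, 0 < d /\ forall h : R, h != 0 -> `|h| < d -> 0 <= l + h ->
    normc ((F (l + h) - F l) / h%:C - D l) < e.
Proof.
move=> l0 e e0; have [C C0 hC] := taylor (addr_ge0 l0 ler01).
exists (Num.min 1 (e / (C + 1))); split; first by rewrite lt_min ltr01 divr_gt0 //; lra.
move=> h h0; rewrite lt_min => /andP[h1 he] lh0.
have hl : 0 <= l <= l + 1 by rewrite l0 lerDl ler01.
have hlh : 0 <= l + h <= l + 1.
  by rewrite lh0 lerD2l; apply: le_trans (ler_norm _) (ltW h1).
have := hC _ _ hl hlh; rewrite [l + h - l]addrC addKr => rem.
have -> : (F (l + h) - F l) / h%:C - D l = (F (l + h) - F l - h%:C * D l) / h%:C.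
  by field; rewrite eq_complex /= negb_and h0.
have ha : 0 < `|h| by rewrite normr_gt0.
rewrite normcM normcV normc_real ltr_pdivrMr // -(real_normK (num_real h)) in rem *.
rewrite ltr_pdivlMr ?ltr_wpDl // in he.
by apply: le_lt_trans rem _; nra.
Qed.

Lemma taylor_continuous (l : R) : 0 <= l -> forall e : R, 0 < e ->
  exists d : R, 0 < d /\ forall l' : R, 0 <= l' -> `|l' - l| < d ->
    normc (D l' - D l) < e.
Proof.
move=> l0 e e0; have [C C0 hC] := taylor (addr_ge0 l0 ler01).
exists (Num.min 1 (e / (2 * C + 1))); split; first by rewrite lt_min ltr01 divr_gt0 //; lra.
move=> l' l'0; rewrite lt_min => /andP[d1 de].
have hl : 0 <= l <= l + 1 by rewrite l0 lerDl ler01.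
have hl' : 0 <= l' <= l + 1 by rewrite l'0 /=; move: d1; rewrite ltr_norml; lra.
have [->|neq] := eqVneq l' l; first by rewrite subrr normc0.
have ha : 0 < `|l' - l| by rewrite normr_gt0 subr_eq0.
have key : normc ((l' - l)%:C * (D l' - D l)) <= 2 * ((l' - l) ^+ 2 * C).
  have -> : (l' - l)%:C * (D l' - D l) =
      (F l' - F l - (l' - l)%:C * D l) + (F l - F l' - (l - l')%:C * D l').
    by rewrite !rmorphB /=; ring.
  apply: le_trans (le_normcD _ _) _.
  have := hC _ _ hl hl'; have := hC _ _ hl' hl; rewrite -(opprB l' l) sqrrN; lra.
rewrite normcM normc_real -(real_normK (num_real (l' - l))) in key.
rewrite ltr_pdivlMr ?ltr_wpDl ?mulr_ge0 // in de.
have := normc_ge0 (D l' - D l); nra.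
Qed.

Lemma C1_on_Rplus_of_taylor : C1_on_Rplus F D.
Proof. by split; [exact: taylor_differentiable | exact: taylor_continuous]. Qed.

End TaylorC1.

Section Denominators.
Context {R : realType}.
Variable c : R.
Hypothesis c_gt0 : 0 < c.
Implicit Types (z : R[i]) (l w L : R).

Definition den l w : R[i] := c%:C + 'i * w%:C + l%:C.
Definition denz z l w : R[i] := den l w - l%:C * z.

Lemma denz0 l w : denz 0 l w = den l w.
Proof. by rewrite /denz mulr0 subr0. Qed.

Lemma denz_lower z l w : 0 <= l -> normc z <= 1 ->
  c <= normc (denz z l w) /\ `|w| <= normc (denz z l w) + l.
Proof.
move=> l0 z1.
have [ReE ImE] : complex.Re (denz z l w) = c + l - l * complex.Re z /\
                 complex.Im (denz z l w) = w - l * complex.Im z.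
  by case: z {z1} => x y; rewrite /denz /den /=; split; ring.
have hre : `|complex.Re z| <= 1 := le_trans (normc_Re z) z1.
have him : `|complex.Im z| <= 1 := le_trans (normc_Im z) z1.
split.
- apply: le_trans (normc_Re _); rewrite ReE.
  have : l * complex.Re z <= l.
    apply: le_trans (ler_norm _) _; rewrite normrM ger0_norm //.
    by rewrite -[X in _ <= X]mulr1 ler_wpM2l.
  by move=> h; apply: le_trans (ler_norm _); lra.
- have := normc_Im (denz z l w); rewrite ImE => h.
  have : `|l * complex.Im z| <= l.
    by rewrite normrM ger0_norm // -[X in _ <= X]mulr1 ler_wpM2l.
  have : `|w| <= `|w - l * complex.Im z| + `|l * complex.Im z|.
    by rewrite -[X in `|X|](subrK (l * complex.Im z)) ler_normD.
  lra.
Qed.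

Lemma normc_inv_denz_le z l w : 0 <= l -> normc z <= 1 -> normc (denz z l w)^-1 <= c^-1.
Proof.
move=> l0 z1; have [cle _] := denz_lower w l0 z1.
by rewrite normcV lef_pV2 ?posrE // (lt_le_trans c_gt0).
Qed.

Lemma normc_inv_den_le l w : 0 <= l -> normc (den l w)^-1 <= c^-1.
Proof. by move=> l0; rewrite -denz0 normc_inv_denz_le // normc0. Qed.

Definition growth L := 1 + (1 + L) / c.

Lemma denz_growth z l w L : 0 <= l <= L -> normc z <= 1 ->
  1 + `|w| <= growth L * normc (denz z l w).
Proof.
move=> /andP[l0 lL] z1; have [cle wle] := denz_lower w l0 z1.
set x := normc _ in cle wle *.
have x_gt0 : 0 < x := lt_le_trans c_gt0 cle.
have one_le : 1 <= x / c by rewrite ler_pdivlMr // mul1r.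
have : l <= L * (x / c) by nra.
have -> : growth L * x = x + x / c + L * (x / c) by rewrite /growth; field; rewrite gt_eqF.
lra.
Qed.

Lemma normc_inv_den_denz_le z l w L : 0 <= l <= L -> normc z <= 1 ->
  normc (den l w)^-1 * normc (denz z l w)^-1 <= growth L ^+ 2 * sqr_decay 1 w.
Proof.
move=> lL z1; have l0 := (andP lL).1.
have n01 : normc (0 : R[i]) <= 1 by rewrite normc0 ler01.
have ga := denz_growth w lL n01; rewrite denz0 in ga.
have gb := denz_growth w lL z1.
have [ca _] := denz_lower w l0 n01; rewrite denz0 in ca.
have [cb _] := denz_lower w l0 z1.
set x := normc (den l w) in ga ca *; set y := normc (denz z l w) in gb cb *.
have x0 : 0 < x := lt_le_trans c_gt0 ca; have y0 : 0 < y := lt_le_trans c_gt0 cb.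
have r0 : 0 < 1 + `|w| by apply: ltr_pwDl.
have G0 : 0 < growth L by rewrite -(pmulr_lgt0 _ x0); apply: lt_le_trans ga.
rewrite !normcV -invfM /sqr_decay -[growth L ^+ 2]invrK -invfM.
rewrite lef_pV2 ?posrE ?mulr_gt0 ?invr_gt0 ?exprn_gt0 //.
rewrite ler_pdivrMl ?exprn_gt0 // expr2 mulrACA.
by apply: ler_pM => //; exact: ltW.
Qed.

End Denominators.

Section Integrand.
Context {R : realType}.
Variable c : R.
Hypothesis c_gt0 : 0 < c.
Implicit Types (u z : R[i]) (l w L : R).

Local Notation den := (den c).
Local Notation denz := (denz c).

Definition psi u z l w := u * (den l w)^-1 * (denz z l w)^-1.

Definition dpsi u z l w :=
  - (u * ((den l w)^-1 + (1 - z) * (denz z l w)^-1) * (den l w)^-1 * (denz z l w)^-1).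

Lemma Psi_psi (z1 z2 : R -> R[i]) l w : Psi c z1 z2 l w = psi (z1 w) (z2 w) l w.
Proof. by rewrite /Psi /psi invfM mulrA. Qed.

Lemma invc_ge0 : 0 <= c^-1.
Proof. by rewrite invr_ge0 ltW. Qed.

Lemma normc_1B_le z : normc z <= 1 -> normc (1 - z) <= 2.
Proof. by move=> z1; apply: le_trans (le_normcB _ _) _; rewrite normc1; lra. Qed.

Lemma normc_psi_le u z l w L : 0 <= l <= L -> normc u <= 1 -> normc z <= 1 ->
  normc (psi u z l w) <= growth c L ^+ 2 * sqr_decay 1 w.
Proof.
move=> lL u1 z1; rewrite /psi !normcM -mulrA -[X in _ <= X]mul1r.
by apply: ler_pM => //; [exact: normc_ge0 | exact: mulr_ge0 (normc_ge0 _) (normc_ge0 _)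
  | exact: normc_inv_den_denz_le].
Qed.

Lemma normc_dpsi_factor_le z l w : 0 <= l -> normc z <= 1 ->
  normc ((den l w)^-1 + (1 - z) * (denz z l w)^-1) <= 3 * c^-1.
Proof.
move=> l0 z1; apply: le_trans (le_normcD _ _) _; rewrite normcM.
have := normc_inv_den_le c_gt0 w l0; have := normc_inv_denz_le c_gt0 w l0 z1.
have := normc_1B_le z1; have := normc_ge0 (1 - z); have := normc_ge0 (denz z l w)^-1.
have := invc_ge0; nra.
Qed.

Lemma normc_dpsi_le u z l w L : 0 <= l <= L -> normc u <= 1 -> normc z <= 1 ->
  normc (dpsi u z l w) <= 3 * c^-1 * growth c L ^+ 2 * sqr_decay 1 w.
Proof.
move=> lL u1 z1; rewrite /dpsi normcN !normcM -(mulrA _ (normc (den l w)^-1)).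
apply: (@le_trans _ _ ((1 * (3 * c^-1)) * (growth c L ^+ 2 * sqr_decay 1 w))); last first.
  by rewrite mul1r !mulrA.
apply: ler_pM; rewrite ?mulr_ge0 ?normc_ge0 //; last exact: normc_inv_den_denz_le.
apply: ler_pM; rewrite ?normc_ge0 //; exact: normc_dpsi_factor_le w (andP lL).1 z1.
Qed.

Lemma den_shift l l' w : den l' w = den l w + (l' - l)%:C.
Proof. by rewrite /den rmorphB /=; ring. Qed.

Lemma denz_shift z l l' w : denz z l' w = denz z l w + (l' - l)%:C * (1 - z).
Proof. by rewrite /denz (den_shift l) rmorphB /=; ring. Qed.

Lemma denz_neq0 z l w : 0 <= l -> normc z <= 1 -> denz z l w != 0.
Proof.
move=> l0 z1; have [cle _] := denz_lower c w l0 z1.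
by apply: contraTneq cle => ->; rewrite normc0 -ltNge.
Qed.

Lemma den_neq0 l w : 0 <= l -> den l w != 0.
Proof. by move=> l0; rewrite -denz0 denz_neq0 // normc0 ler01. Qed.

(* Exact second-order remainder of l |-> u / ((a + l) (b + l s)). *)
Lemma psi_remainder_identity (a b h s u : R[i]) :
  a != 0 -> b != 0 -> a + h != 0 -> b + h * s != 0 ->
  u * (a + h)^-1 * (b + h * s)^-1 - u * a^-1 * b^-1 -
    h * (- (u * (a^-1 + s * b^-1) * a^-1 * b^-1)) =
  u * h ^+ 2 * ((a^-1 + s * b^-1) * (a^-1 + s * b^-1 + h * s * a^-1 * b^-1)
                - s * a^-1 * b^-1) * ((a + h)^-1 * (b + h * s)^-1).
Proof. by move=> ha hb hah hbh; field; rewrite hbh hah hb ha. Qed.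

Definition taylor_const L :=
  3 * c^-1 * (3 * c^-1 + L * (2 * c^-1 * c^-1)) + 2 * c^-1 * c^-1.

Lemma normc_psi_remainder_factor_le z l w h L : 0 <= l -> normc z <= 1 -> `|h| <= L ->
  normc (((den l w)^-1 + (1 - z) * (denz z l w)^-1) *
         ((den l w)^-1 + (1 - z) * (denz z l w)^-1 +
            h%:C * (1 - z) * (den l w)^-1 * (denz z l w)^-1)
         - (1 - z) * (den l w)^-1 * (denz z l w)^-1) <= taylor_const L.
Proof.
move=> l0 z1 hL.
set X := (_ + _ * _); set S := (1 - z) * _ * _.
have -> : h%:C * (1 - z) * (den l w)^-1 * (denz z l w)^-1 = h%:C * S by rewrite /S !mulrA.
have nX : normc X <= 3 * c^-1 := normc_dpsi_factor_le w l0 z1.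
have nS : normc S <= 2 * c^-1 * c^-1.
  rewrite /S !normcM; apply: ler_pM; rewrite ?mulr_ge0 ?normc_ge0 ?invc_ge0 //.
    apply: ler_pM; rewrite ?normc_ge0 //; first exact: normc_1B_le.
    exact: normc_inv_den_le.
  exact: normc_inv_denz_le.
have nXS : normc (X + h%:C * S) <= 3 * c^-1 + L * (2 * c^-1 * c^-1).
  apply: le_trans (le_normcD _ _) _; rewrite normcM normc_real.
  have := normc_ge0 S; have := normr_ge0 h; nra.
apply: le_trans (le_normcB _ _) _; rewrite normcM /taylor_const.
have := normc_ge0 X; have := normc_ge0 (X + h%:C * S); have := invc_ge0; nra.
Qed.

Lemma psi_taylor u z l l' w L : 0 <= l <= L -> 0 <= l' <= L ->
  normc u <= 1 -> normc z <= 1 ->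
  normc (psi u z l' w - psi u z l w - (l' - l)%:C * dpsi u z l w)
  <= (l' - l) ^+ 2 * (taylor_const L * growth c L ^+ 2 * sqr_decay 1 w).
Proof.
move=> /andP[l0 lL] /andP[l'0 l'L] u1 z1.
have hL : `|l' - l| <= L by rewrite ler_norml; apply/andP; split; lra.
have Y := normc_psi_remainder_factor_le w l0 z1 hL.
have D := @normc_inv_den_denz_le _ _ c_gt0 z l' w L ltac:(by rewrite l'0 l'L) z1.
rewrite /psi /dpsi (den_shift l l') (denz_shift z l l') psi_remainder_identity;
  try by rewrite -?den_shift -?denz_shift ?den_neq0 ?denz_neq0.
rewrite -den_shift -denz_shift !normcM normc_real -normrM -expr2 ger0_norm ?sqr_ge0 //.
set Yn := normc (_ - _) in Y *.
set P := normc (den l' w)^-1 * _ in D *.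
have -> : normc u * (l' - l) ^+ 2 * Yn * P = (l' - l) ^+ 2 * (normc u * (Yn * P)) by ring.
apply: ler_wpM2l; first exact: sqr_ge0.
rewrite -mulrA -[X in _ <= X]mul1r.
apply: ler_pM; rewrite ?mulr_ge0 ?normc_ge0 //.
by apply: ler_pM Y D; rewrite /Yn /P ?mulr_ge0 ?normc_ge0.
Qed.

Lemma psi_sub_identity (a l u ut z zt : R[i]) : a != 0 -> a - l * z != 0 -> a - l * zt != 0 ->
  u * a^-1 * (a - l * z)^-1 - ut * a^-1 * (a - l * zt)^-1 =
  (u - ut) * (a^-1 * (a - l * z)^-1) +
    ut * l * (z - zt) * (a^-1 * (a - l * z)^-1) * (a - l * zt)^-1.
Proof. by move=> h1 h2 h3; field; rewrite h1 h2 h3. Qed.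

Lemma normc_psi_sub_le u z ut zt l w L (d : R) : 0 <= l <= L ->
  normc u <= 1 -> normc z <= 1 -> normc ut <= 1 -> normc zt <= 1 ->
  normc (u - ut) <= d -> normc (z - zt) <= d ->
  normc (psi u z l w - psi ut zt l w)
  <= d * ((1 + L * c^-1) * growth c L ^+ 2 * sqr_decay 1 w).
Proof.
move=> lL u1 z1 ut1 zt1 du dz; have /andP[l0 lL'] := lL.
have G := normc_inv_den_denz_le c_gt0 w lL z1.
have It := normc_inv_denz_le c_gt0 w l0 zt1.
rewrite /psi /denz psi_sub_identity ?den_neq0 -/(denz z l w) -/(denz zt l w)
  ?denz_neq0 //.
apply: le_trans (le_normcD _ _) _; rewrite !normcM normc_real ger0_norm //.
set N := normc (den l w)^-1 * normc (denz z l w)^-1 in G *.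
set G2 := growth c L ^+ 2 * sqr_decay 1 w in G *.
have N0 : 0 <= N by rewrite /N mulr_ge0 ?normc_ge0.
have t1 : normc (u - ut) * N <= d * G2 by apply: ler_pM; rewrite ?normc_ge0.
have t2 : normc ut * l * normc (z - zt) * N * normc (denz zt l w)^-1 <= 1 * L * d * G2 * c^-1.
  by do 4 (apply: ler_pM; rewrite ?mulr_ge0 ?normc_ge0 //).
have -> : d * ((1 + L * c^-1) * growth c L ^+ 2 * sqr_decay 1 w) =
          d * G2 + 1 * L * d * G2 * c^-1.
  by rewrite /G2; ring.
exact: lerD.
Qed.

Lemma normc_psi_sub_window_le u z ut zt l w L W (d : R) : 0 <= l <= L -> 0 < W -> 0 <= d ->
  normc u <= 1 -> normc z <= 1 -> normc ut <= 1 -> normc zt <= 1 ->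
  (`|w| <= W -> normc (u - ut) <= d /\ normc (z - zt) <= d) ->
  normc (psi u z l w - psi ut zt l w)
  <= d * ((1 + L * c^-1) * growth c L ^+ 2) * sqr_decay 1 w
     + 8 * growth c L ^+ 2 * sqr_decay W w.
Proof.
move=> lL W0 d0 u1 z1 ut1 zt1 hd; have /andP[l0 lL'] := lL.
have A0 : 0 <= (1 + L * c^-1) * growth c L ^+ 2.
  by rewrite mulr_ge0 ?sqr_ge0 // addr_ge0 // mulr_ge0 ?invc_ge0 // (le_trans l0).
have g1 := sqr_decay_ge0 1 w; have gW := sqr_decay_ge0 W w.
have QgW := mulr_ge0 (sqr_ge0 (growth c L)) gW.
have [wW | Ww] := lerP `|w| W.
  have [du dz] := hd wW.
  apply: le_trans (normc_psi_sub_le w lL u1 z1 ut1 zt1 du dz) _.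
  by rewrite !mulrA lerDl; lra.
apply: le_trans (le_normcB _ _) _.
have := normc_psi_le w lL u1 z1; have := normc_psi_le w lL ut1 zt1.
have := sqr_decay_le_shift ler01 W0 (ltW Ww); have := mulr_ge0 (mulr_ge0 d0 A0) g1.
have := sqr_ge0 (growth c L); nra.
Qed.

End Integrand.

Section IntegratedPsi.
Context {R : realType}.
Variable c : R.
Hypothesis c_gt0 : 0 < c.
Implicit Types (l L : R).

Lemma cmeasurable_den l : cmeasurable (den c l).
Proof.
apply: cmeasurableD; last exact: cmeasurable_cst.
apply: cmeasurableD; first exact: cmeasurable_cst.
by apply: cmeasurableM; [exact: cmeasurable_cst | exact: cmeasurable_real].
Qed.

Lemma cmeasurable_denz (z2 : R -> R[i]) l :
  cmeasurable z2 -> cmeasurable (fun w => denz c (z2 w) l w).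
Proof.
move=> m2; apply: cmeasurableB; first exact: cmeasurable_den.
by apply: cmeasurableM => //; exact: cmeasurable_cst.
Qed.

Lemma cmeasurable_psi (z1 z2 : R -> R[i]) l : cmeasurable z1 -> cmeasurable z2 ->
  cmeasurable (fun w => psi c (z1 w) (z2 w) l w).
Proof.
move=> m1 m2; apply: cmeasurableM; last exact/cmeasurableV/cmeasurable_denz.
by apply: cmeasurableM => //; exact/cmeasurableV/cmeasurable_den.
Qed.

Lemma cmeasurable_dpsi (z1 z2 : R -> R[i]) l : cmeasurable z1 -> cmeasurable z2 ->
  cmeasurable (fun w => dpsi c (z1 w) (z2 w) l w).
Proof.
move=> m1 m2; have ma := cmeasurableV (cmeasurable_den l).
have mb := cmeasurableV (cmeasurable_denz l m2).
apply: cmeasurableN; do 3 apply: cmeasurableM => //.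
apply: cmeasurableD => //; apply: cmeasurableM => //.
by apply: cmeasurableB => //; exact: cmeasurable_cst.
Qed.

Definition DPsiInt (z1 z2 : R -> R[i]) l := cintegral (fun w => dpsi c (z1 w) (z2 w) l w).

Lemma PsiIntE (z1 z2 : R -> R[i]) l :
  PsiInt c z1 z2 l = cintegral (fun w => psi c (z1 w) (z2 w) l w).
Proof. by rewrite /PsiInt; congr cintegral; apply: funext => w; exact: Psi_psi. Qed.

Lemma cintegrable_psi (z1 z2 : R -> R[i]) l : admissible z1 z2 -> 0 <= l ->
  cintegrable (fun w => psi c (z1 w) (z2 w) l w).
Proof.
move=> [m1 [m2 [b1 b2]]] l0.
apply: (@cintegrable_decay _ _ (growth c l ^+ 2)); first exact: cmeasurable_psi.
by move=> w; apply: normc_psi_le; rewrite ?l0 ?lexx.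
Qed.

Lemma normc_DPsiInt_le (z1 z2 : R -> R[i]) l L : admissible z1 z2 -> 0 <= l <= L ->
  normc (DPsiInt z1 z2 l) <= 4 * (3 * c^-1 * growth c L ^+ 2).
Proof.
move=> [m1 [m2 [b1 b2]]] lL; apply: normc_cintegral_le_decay; first exact: cmeasurable_dpsi.
by move=> w; exact: normc_dpsi_le.
Qed.

Lemma PsiInt_taylor (z1 z2 : R -> R[i]) l l' L :
  admissible z1 z2 -> 0 <= l <= L -> 0 <= l' <= L ->
  normc (PsiInt c z1 z2 l' - PsiInt c z1 z2 l - (l' - l)%:C * DPsiInt z1 z2 l)
  <= (l' - l) ^+ 2 * (4 * (taylor_const c L * growth c L ^+ 2)).
Proof.
move=> adm lL l'L; have [m1 [m2 [b1 b2]]] := adm.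
have id : cintegrable (fun w => dpsi c (z1 w) (z2 w) l w).
  apply: (@cintegrable_decay _ _ (3 * c^-1 * growth c L ^+ 2)).
    exact: cmeasurable_dpsi.
  by move=> w; exact: normc_dpsi_le.
have il := cintegrable_psi adm (andP lL).1.
have il' := cintegrable_psi adm (andP l'L).1.
rewrite !PsiIntE /DPsiInt -cintegralZ // -!cintegralB //;
  [| exact: cintegrableB | exact: cintegrableZ].
rewrite mulrCA; apply: normc_cintegral_le_decay.
  apply: cmeasurableB; first by apply: cmeasurableB; exact: cmeasurable_psi.
  by apply: cmeasurableM; [exact: cmeasurable_cst | exact: cmeasurable_dpsi].
by move=> w; have := psi_taylor c_gt0 w lL l'L (b1 w) (b2 w); rewrite !mulrA.
Qed.

Lemma taylor_const_ge0 L : 0 <= L -> 0 <= taylor_const c L.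
Proof. by move=> L0; rewrite /taylor_const !(addr_ge0, mulr_ge0) // invr_ge0 ltW. Qed.

Lemma PsiInt_C1 z1 z2 : admissible z1 z2 -> C1_on_Rplus (PsiInt c z1 z2) (DPsiInt z1 z2).
Proof.
move=> adm; apply: C1_on_Rplus_of_taylor => L L0.
exists (4 * (taylor_const c L * growth c L ^+ 2)).
  by apply: mulr_ge0 => //; apply: mulr_ge0; [exact: taylor_const_ge0 | exact: sqr_ge0].
by move=> l l' lL l'L; exact: PsiInt_taylor.
Qed.

End IntegratedPsi.

Section PsiIntLipschitz.
Context {R : realType}.
Variable c : R.
Hypothesis c_gt0 : 0 < c.
Local Notation mu := (@lebesgue_measure R).
Implicit Types (l L W d : R).

Definition lipschitz_const L :=
  4 * ((1 + L / c) * growth c L ^+ 2) + 32 * growth c L ^+ 2.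

Lemma lipschitz_const_gt0 L : 0 <= L -> 0 < lipschitz_const L.
Proof.
move=> L0; have G0 : 0 < growth c L by rewrite /growth ltr_wpDr // divr_ge0 ?addr_ge0 // ltW.
have A0 : 0 <= 1 + L / c by rewrite addr_ge0 // divr_ge0 // ltW.
apply: ltr_wpDl; first by apply: mulr_ge0 => //; apply: mulr_ge0 => //; exact: sqr_ge0.
by rewrite mulr_gt0 // exprn_gt0.
Qed.

Lemma PsiInt_sub (z1 z2 zt1 zt2 : R -> R[i]) l :
  admissible z1 z2 -> admissible zt1 zt2 -> 0 <= l ->
  PsiInt c z1 z2 l - PsiInt c zt1 zt2 l =
  cintegral (fun w => psi c (z1 w) (z2 w) l w - psi c (zt1 w) (zt2 w) l w).
Proof.
by move=> adm admt l0; rewrite !PsiIntE cintegralB //; exact: cintegrable_psi.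
Qed.

Lemma PsiInt_sub_window (z1 z2 zt1 zt2 : R -> R[i]) W d l L :
  admissible z1 z2 -> admissible zt1 zt2 -> 1 <= W ->
  (forall w, - W <= w <= W -> normc (z1 w - zt1 w) <= d /\ normc (z2 w - zt2 w) <= d) ->
  0 <= l <= L ->
  normc (PsiInt c z1 z2 l - PsiInt c zt1 zt2 l) <= lipschitz_const L * (d + W^-1).
Proof.
move=> adm admt W1 hd lL; have l0 := (andP lL).1.
have [[m1 [m2 [b1 b2]]] [mt1 [mt2 [bt1 bt2]]]] := (adm, admt).
have W0 : 0 < W by lra.
have d0 : 0 <= d.
  have [h _] := hd 0 ltac:(by rewrite oppr_le0 andbb ltW).
  exact: le_trans (normc_ge0 _) h.
set Q2 := growth c L ^+ 2; set A := (1 + L / c) * Q2.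
have Q20 : 0 <= Q2 by exact: sqr_ge0.
have A0 : 0 <= A.
  apply: mulr_ge0 => //; apply: addr_ge0 => //; apply: divr_ge0; last exact: ltW.
  exact: le_trans l0 (andP lL).2.
set g := fun w => d * A * sqr_decay 1 w + 8 * Q2 * sqr_decay W w.
have ig : mu.-integrable setT (EFin \o g).
  have -> : EFin \o g = ((EFin \o fun w => d * A * sqr_decay 1 w) \+
                         (EFin \o fun w => 8 * Q2 * sqr_decay W w)) by [].
  by apply: integrableD => //; exact: integrable_sqr_decay.
have mf : cmeasurable (fun w => psi c (z1 w) (z2 w) l w - psi c (zt1 w) (zt2 w) l w).
  by apply: cmeasurableB; exact: cmeasurable_psi.
have bound w : normc (psi c (z1 w) (z2 w) l w - psi c (zt1 w) (zt2 w) l w) <= g w.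
  apply: (normc_psi_sub_window_le c_gt0 lL W0 d0 (b1 w) (b2 w) (bt1 w) (bt2 w)).
  by move=> ww; apply: hd; rewrite -ler_norml.
rewrite PsiInt_sub //; apply: le_trans (normc_cintegral_le mf ig bound) _.
rewrite /g RintegralD ?integrable_sqr_decay // !Rintegral_sqr_decay // invr1.
have := invr_ge0 W; rewrite (ltW W0) /lipschitz_const -/Q2 -/A; nra.
Qed.

Lemma PsiInt_sub_le (z1 z2 zt1 zt2 : R -> R[i]) d l L :
  admissible z1 z2 -> admissible zt1 zt2 ->
  (forall w, normc (z1 w - zt1 w) <= d /\ normc (z2 w - zt2 w) <= d) ->
  0 <= l <= L ->
  normc (PsiInt c z1 z2 l - PsiInt c zt1 zt2 l) <= lipschitz_const L * d.
Proof.
move=> adm admt hd lL; have K0 := lipschitz_const_gt0 (le_trans (andP lL).1 (andP lL).2).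
set K := lipschitz_const L in K0 *.
apply/ler_addgt0Pr => e e0; set W := Num.max 1 (K / e).
have W1 : 1 <= W by rewrite le_max lexx.
have W0 : 0 < W by lra.
apply: le_trans (PsiInt_sub_window adm admt W1 (fun w _ => hd w) lL) _.
by rewrite mulrDr lerD2l ler_pdivrMr // mulrC -ler_pdivrMr // le_max lexx orbT.
Qed.

End PsiIntLipschitz.

Theorem lemma1 (R : realType) (c eta0 : R) (hc : 0 < c) (heta0 : 0 < eta0) :
  (* (i) *)
  (exists M : R, forall z1 z2 : R -> R[i], admissible z1 z2 ->
     exists D : R -> R[i], C1_on_Rplus (PsiInt c z1 z2) D /\
       (forall l : R, 0 <= l <= eta0 -> normc (D l) <= M)) /\
  (* (ii) *)
  (exists K : R, 0 < K /\
     forall z1 z2 zt1 zt2 : R -> R[i], admissible z1 z2 -> admissible zt1 zt2 ->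
     (* finite W >= 1; delta is any upper bound of
        max_i sup_{w in [-W,W]} |z_i w - zt_i w| *)
     (forall (W delta : R), 1 <= W ->
        (forall w : R, - W <= w <= W ->
           normc (z1 w - zt1 w) <= delta /\ normc (z2 w - zt2 w) <= delta) ->
        forall l : R, 0 <= l <= eta0 ->
          normc (PsiInt c z1 z2 l - PsiInt c zt1 zt2 l) <= K * (delta + W^-1)) /\
     (* W = infinity *)
     (forall delta : R,
        (forall w : R,
           normc (z1 w - zt1 w) <= delta /\ normc (z2 w - zt2 w) <= delta) ->
        forall l : R, 0 <= l <= eta0 ->
          normc (PsiInt c z1 z2 l - PsiInt c zt1 zt2 l) <= K * delta)).
Proof.
split.
  exists (4 * (3 * c^-1 * growth c eta0 ^+ 2)) => z1 z2 adm.
  exists (DPsiInt c z1 z2); split; first exact: PsiInt_C1.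
  by move=> l; exact: normc_DPsiInt_le.
exists (lipschitz_const c eta0); split; first exact/lipschitz_const_gt0/ltW.
move=> z1 z2 zt1 zt2 adm admt; split.
  by move=> W d W1 hd l; exact: PsiInt_sub_window.
by move=> d hd l; exact: PsiInt_sub_le.
Qed.
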